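(* For every $\mu$ in the upper half-plane, \[J_{\frac{2\mu+1}{2}}\!\left(e^{\pi i\mu}\right)=J_{2\mu}\!\left(e^{\pi i\mu}\right)-J_{2\mu}\!\left(-e^{\pi i\mu}\right).\]
   Context: Let $J(z)=\log|z|\log|1-z|$ and $B_3(x)=x^3-\frac32x^2+\frac12x$. For $\sigma$ in the upper half-plane, with $Q=e^{2\pi i\sigma}$, and $z\in\mathbb{C}^*$ not in $Q^{\mathbb{Z}}$, define \[J_\sigma(z)=\sum_{n=0}^\infty J(zQ^n)-\sum_{n=1}^\infty J(z^{-1}Q^n)+\frac13\log^2|Q|\,B_3\!\left(\frac{\log|z|}{\log|Q|}\right).\] *)

From Stdlib Require Import Reals.
From Coquelicot Require Import Coquelicot.
Open Scope R_scope.

Definition Cexp (w : C) : C :=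
  (exp (Re w) * cos (Im w), exp (Re w) * sin (Im w)).

Fixpoint Cpow (z : C) (n : nat) : C :=
  match n with
  | O => 1%C
  | S m => Cmult z (Cpow z m)
  end.

Definition Jf (z : C) : R := ln (Cmod z) * ln (Cmod (Cminus 1 z)).

Definition B3 (x : R) : R := x ^ 3 - 3 / 2 * x ^ 2 + 1 / 2 * x.

Definition Qof (sigma : C) : C := Cexp (Cmult (Cmult (RtoC (2 * PI)) Ci) sigma).

Definition Jsig (sigma z : C) : R :=
  let Q := Qof sigma in
  Series (fun n => Jf (Cmult z (Cpow Q n)))
  - Series (fun n => Jf (Cmult (Cinv z) (Cpow Q (S n))))
  + 1 / 3 * (ln (Cmod Q)) ^ 2 * B3 (ln (Cmod z) / ln (Cmod Q)).

(** With [z = e^{pi i mu}] the nome of [(2 mu + 1)/2] is [-z^2] and that of [2 mu] is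
    [z^4]. Splitting the series of [J_{(2mu+1)/2}(z)] by the parity of the index turns
    each term into [J(+-z^{4k+1})] or [J(+-z^{4k+3})], which are exactly the terms of
    [J_{2mu}(z) - J_{2mu}(-z)]. The Bernoulli corrections vanish on the left because
    [log|z| / log|-z^2| = 1/2] is a root of [B_3], and cancel on the right. Convergence
    comes from [|J(w)| <= 2 sqrt|w| / (1 - |w|)]. *)
From Pilot Require Import Defs.
From Stdlib Require Import Reals Lra Lia.
From Coquelicot Require Import Coquelicot.
(* Re-import so that [Cpow] is the power of [Defs], not Coquelicot's. *)
Import Defs.
Open Scope R_scope.

Lemma Series_even_odd (f : nat -> R) :
  ex_series (fun n => f (2 * n)%nat) -> ex_series (fun n => f (2 * n + 1)%nat) ->
  Series f = Series (fun n => f (2 * n)%nat) + Series (fun n => f (2 * n + 1)%nat).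
Proof.
  intros [l1 H1] [l2 H2].
  rewrite (is_series_unique _ _ H1), (is_series_unique _ _ H2).
  apply is_series_unique.
  assert (to_pseries : forall (g : nat -> R) (l : R), is_series g l -> is_pseries g (1 ^ 2) l).
  { intros g l Hg. eapply is_series_ext; [|exact Hg]. intros n.
    rewrite pow_n_pow, !pow1. symmetry; exact (scal_one _). }
  pose proof (is_pseries_odd_even f 1 l1 l2 (to_pseries _ _ H1) (to_pseries _ _ H2)) as P.
  unfold is_pseries in P. replace (l1 + l2) with (l1 + 1 * l2) by ring.
  eapply is_series_ext; [|exact P]. intros n. cbv beta.
  rewrite pow_n_pow, !pow1. exact (scal_one _).
Qed.

Lemma ln_abs_le (y t : R) : Rabs (y - 1) <= t -> t < 1 -> Rabs (ln y) <= t / (1 - t).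
Proof.
  intros Hy Ht. apply Rabs_le_between in Hy.
  assert (Hy0 : 0 < y) by lra.
  assert (upper := exp_ineq1_le (ln y)). rewrite exp_ln in upper by lra.
  assert (lower := exp_ineq1_le (ln (/ (1 - t)))).
  rewrite exp_ln, ln_Rinv in lower by (try apply Rinv_0_lt_compat; lra).
  assert (ln (1 - t) <= ln y) by (apply ln_le; lra).
  assert (t <= t / (1 - t)).
  { apply (Rmult_le_reg_r (1 - t)); [lra|]. field_simplify; nra. }
  assert (/ (1 - t) - 1 = t / (1 - t)) by (field; lra).
  apply Rabs_le. lra.
Qed.

(* [ln (1/sqrt x) <= 1/sqrt x - 1], doubled and multiplied by [x]. *)
Lemma neg_ln_mul_le_sqrt (x : R) : 0 < x -> - ln x * x <= 2 * sqrt x.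
Proof.
  intros Hx.
  assert (Hs : 0 < sqrt x) by (apply sqrt_lt_R0; lra).
  assert (Hln : ln x = - 2 * ln (/ sqrt x)).
  { rewrite ln_Rinv by lra. rewrite <- (sqrt_sqrt x) at 1 by lra.
    rewrite ln_mult by lra. ring. }
  assert (Hexp := exp_ineq1_le (ln (/ sqrt x))).
  rewrite exp_ln in Hexp by (apply Rinv_0_lt_compat; lra).
  assert (Hxs : x * / sqrt x = sqrt x).
  { rewrite <- (sqrt_sqrt x) at 1 by lra. field. lra. }
  rewrite Hln. nra.
Qed.

Lemma Jf_bound (w : C) : Cmod w < 1 -> Rabs (Jf w) <= 2 * sqrt (Cmod w) / (1 - Cmod w).
Proof.
  intros Hw.
  assert (Hbound_ge0 : 0 <= 2 * sqrt (Cmod w) / (1 - Cmod w)).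
  { apply Rmult_le_pos; [apply Rmult_le_pos; [lra | apply sqrt_pos]|].
    apply Rlt_le, Rinv_0_lt_compat; lra. }
  destruct (Req_dec (Cmod w) 0) as [Hw0 | Hw0].
  (* [Jf 0 = ln 0 * ln 1] vanishes whatever the junk value [ln 0] is. *)
  { apply Cmod_eq_0 in Hw0. subst w. unfold Jf.
    replace (Cminus 1 0) with (RtoC 1) by (unfold Cminus; ring).
    rewrite Cmod_1, ln_1, Rmult_0_r, Rabs_R0. exact Hbound_ge0. }
  set (r := Cmod w) in *.
  assert (Hr : 0 < r) by (assert (0 <= r) by apply Cmod_ge_0; lra).
  assert (Hlnr : ln r < 0) by (rewrite <- ln_1; apply ln_increasing; lra).
  assert (Hnear1 : Rabs (Cmod (Cminus 1 w) - 1) <= r).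
  { rewrite <- Cmod_1 at 2. rewrite !Cmod_norm.
    eapply Rle_trans; [apply norm_triangle_inv|].
    rewrite <- Cmod_norm, <- Cmod_opp. right. unfold r. f_equal.
    change (minus (Cminus 1 w) (RtoC 1)) with (Cplus (Cminus 1 w) (Copp (RtoC 1))).
    unfold Cminus. ring. }
  assert (Hln1 := ln_abs_le _ _ Hnear1 Hw).
  unfold Jf. fold r. rewrite Rabs_mult, (Rabs_left (ln r)) by exact Hlnr.
  apply Rle_trans with (- ln r * (r / (1 - r))).
  { apply Rmult_le_compat_l; lra. }
  unfold Rdiv. rewrite <- Rmult_assoc.
  apply Rmult_le_compat_r; [apply Rlt_le, Rinv_0_lt_compat; lra|].
  apply neg_ln_mul_le_sqrt; exact Hr.
Qed.

Lemma Cmod_Cpow (z : C) (n : nat) : Cmod (Cpow z n) = Cmod z ^ n.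
Proof. induction n as [|n IH]; simpl; [apply Cmod_1|]. rewrite Cmod_mult, IH. reflexivity. Qed.

Lemma Cpow_double (q : C) (n : nat) : Cpow q (2 * n)%nat = Cpow (Cmult q q) n.
Proof.
  induction n as [|n IH]; [reflexivity|].
  replace (2 * S n)%nat with (S (S (2 * n))) by lia. cbn [Cpow]. rewrite IH. ring.
Qed.

Lemma sqrt_pow (x : R) (n : nat) : 0 <= x -> sqrt (x ^ n) = sqrt x ^ n.
Proof.
  intros Hx. rewrite <- (pow2_sqrt x) at 1 by exact Hx.
  rewrite <- pow_mult, Nat.mul_comm, pow_mult.
  apply sqrt_pow2, pow_le, sqrt_pos.
Qed.

Lemma ex_series_Jf_geom (a q : C) : Cmod a < 1 -> Cmod q < 1 ->
  ex_series (fun n => Jf (Cmult a (Cpow q n))).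
Proof.
  intros Ha Hq.
  assert (Ha0 := Cmod_ge_0 a). assert (Hq0 := Cmod_ge_0 q).
  set (K := 2 * sqrt (Cmod a) / (1 - Cmod a)).
  apply (@ex_series_le R_AbsRing R_CompleteNormedModule _
           (fun n => K * sqrt (Cmod q) ^ n)).
  - intros n. change (norm (Jf (Cmult a (Cpow q n)))) with (Rabs (Jf (Cmult a (Cpow q n)))).
    assert (Hqn : Cmod q ^ n <= 1) by (rewrite <- (pow1 n); apply pow_incr; lra).
    assert (Hw : Cmod (Cmult a (Cpow q n)) = Cmod a * Cmod q ^ n)
      by now rewrite Cmod_mult, Cmod_Cpow.
    assert (Hwa : Cmod a * Cmod q ^ n <= Cmod a) by nra.
    eapply Rle_trans; [apply Jf_bound; lra|].
    rewrite Hw, sqrt_mult, sqrt_pow by (try apply pow_le; lra).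
    unfold K, Rdiv.
    apply Rle_trans with (2 * (sqrt (Cmod a) * sqrt (Cmod q) ^ n) * / (1 - Cmod a));
      [|right; ring].
    apply Rmult_le_compat_l.
    + assert (0 <= sqrt (Cmod q) ^ n) by apply pow_le, sqrt_pos.
      assert (0 <= sqrt (Cmod a)) by apply sqrt_pos. nra.
    + apply Rinv_le_contravar; lra.
  - apply (ex_series_ext (fun n => scal K (sqrt (Cmod q) ^ n))); [reflexivity|].
    apply (@ex_series_scal_l R_AbsRing R_NormedModule), ex_series_geom.
    rewrite Rabs_pos_eq by apply sqrt_pos.
    rewrite <- sqrt_1. apply sqrt_lt_1_alt. lra.
Qed.

Lemma Series_Jf_geom_even_odd (a q : C) : Cmod a < 1 -> Cmod q < 1 ->
  Series (fun n => Jf (Cmult a (Cpow q n)))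
  = Series (fun n => Jf (Cmult a (Cpow (Cmult q q) n)))
    + Series (fun n => Jf (Cmult (Cmult a q) (Cpow (Cmult q q) n))).
Proof.
  intros Ha Hq.
  assert (Hqq : Cmod (Cmult q q) < 1).
  { rewrite Cmod_mult. assert (Hq0 := Cmod_ge_0 q). nra. }
  assert (Haq : Cmod (Cmult a q) < 1).
  { rewrite Cmod_mult. assert (Ha0 := Cmod_ge_0 a). assert (Hq0 := Cmod_ge_0 q). nra. }
  assert (even : forall n, Jf (Cmult a (Cpow q (2 * n)%nat)) = Jf (Cmult a (Cpow (Cmult q q) n)))
    by (intros n; rewrite Cpow_double; reflexivity).
  assert (odd : forall n, Jf (Cmult a (Cpow q (2 * n + 1)%nat))
                          = Jf (Cmult (Cmult a q) (Cpow (Cmult q q) n))).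
  { intros n. replace (2 * n + 1)%nat with (S (2 * n)) by lia.
    cbn [Cpow]. rewrite Cpow_double. f_equal. ring. }
  rewrite (Series_even_odd (fun n => Jf (Cmult a (Cpow q n)))).
  - now rewrite (Series_ext _ _ even), (Series_ext _ _ odd).
  - eapply ex_series_ext; [intros n; symmetry; apply even|]. now apply ex_series_Jf_geom.
  - eapply ex_series_ext; [intros n; symmetry; apply odd|]. now apply ex_series_Jf_geom.
Qed.

Lemma Series_Jf_shift (b q : C) :
  Series (fun n => Jf (Cmult b (Cpow q (S n))))
  = Series (fun n => Jf (Cmult (Cmult b q) (Cpow q n))).
Proof. apply Series_ext. intros n. cbn [Cpow]. f_equal. ring. Qed.

Lemma B3_half : B3 (1 / 2) = 0.
Proof. unfold B3. field. Qed.

Lemma Jsig_nome_neg_sqr (s1 s2 z : C) : 0 < Cmod z < 1 ->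
  Qof s1 = Copp (Cmult z z) -> Qof s2 = Cpow z 4 ->
  Jsig s1 z = Jsig s2 z - Jsig s2 (Copp z).
Proof.
  intros Hz H1 H2.
  assert (Hz0 : z <> 0%C) by (intros E; rewrite E, Cmod_0 in Hz; lra).
  assert (Hinv : Cmult (Cinv z) (Copp (Cmult z z)) = Copp z) by (field; exact Hz0).
  assert (Hzz : Cmod (Copp (Cmult z z)) < 1) by (rewrite Cmod_opp, Cmod_mult; nra).
  assert (Hz_ : Cmod (Copp z) < 1) by (rewrite Cmod_opp; lra).
  assert (Hratio : ln (Cmod z) / ln (Cmod (Copp (Cmult z z))) = 1 / 2).
  { rewrite Cmod_opp, Cmod_mult, ln_mult by lra.
    assert (ln (Cmod z) < 0) by (rewrite <- ln_1; apply ln_increasing; lra).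
    field. lra. }
  unfold Jsig. rewrite H1, H2, !Series_Jf_shift, Hratio, B3_half, !Cmod_opp.
  rewrite (Series_Jf_geom_even_odd z), Hinv, (Series_Jf_geom_even_odd (Copp z)) by lra.
  replace (Cmult (Copp (Cmult z z)) (Copp (Cmult z z))) with (Cpow z 4) by (cbn [Cpow]; ring).
  replace (Cmult z (Copp (Cmult z z))) with (Copp (Cpow z 3)) by (cbn [Cpow]; ring).
  replace (Cmult (Copp z) (Copp (Cmult z z))) with (Cpow z 3) by (cbn [Cpow]; ring).
  replace (Cmult (Cinv z) (Cpow z 4)) with (Cpow z 3) by (cbn [Cpow]; field; exact Hz0).
  replace (Cmult (Cinv (Copp z)) (Cpow z 4)) with (Copp (Cpow z 3))
    by (cbn [Cpow]; field; exact Hz0).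
  ring.
Qed.

Lemma Cexp_add (a b : C) : Cexp (Cplus a b) = Cmult (Cexp a) (Cexp b).
Proof.
  destruct a as [a1 a2], b as [b1 b2]. unfold Cexp, Cplus, Cmult; simpl.
  rewrite exp_plus, cos_plus, sin_plus. f_equal; ring.
Qed.

Lemma Cmod_Cexp (w : C) : Cmod (Cexp w) = exp (Re w).
Proof.
  unfold Cmod, Cexp; simpl.
  replace (exp (Re w) * cos (Im w) * (exp (Re w) * cos (Im w) * 1)
           + exp (Re w) * sin (Im w) * (exp (Re w) * sin (Im w) * 1))
    with (exp (Re w) ^ 2 * (Rsqr (sin (Im w)) + Rsqr (cos (Im w)))) by (unfold Rsqr; ring).
  rewrite sin2_cos2, Rmult_1_r. apply sqrt_pow2, Rlt_le, exp_pos.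
Qed.

Lemma Cexp_i_PI : Cexp (0, PI) = Copp 1.
Proof.
  unfold Cexp; simpl. rewrite exp_0, cos_PI, sin_PI.
  unfold Copp, RtoC; simpl. f_equal; ring.
Qed.

Theorem mainTheorem16 (mu : C) (Hmu : 0 < Im mu) :
  let z := Cexp (Cmult (Cmult (RtoC PI) Ci) mu) in
  Jsig (Cdiv (Cplus (Cmult (RtoC 2) mu) 1) (RtoC 2)) z
  = Jsig (Cmult (RtoC 2) mu) z - Jsig (Cmult (RtoC 2) mu) (Copp z).
Proof.
  intros z. set (w := Cmult (Cmult (RtoC PI) Ci) mu) in z.
  destruct mu as [a b]. simpl in Hmu.
  apply Jsig_nome_neg_sqr; unfold Qof.
  - unfold z. rewrite Cmod_Cexp.
    replace (Re w) with (- (PI * b)) by (unfold w; simpl; ring).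
    split; [apply exp_pos|]. rewrite <- exp_0. apply exp_increasing.
    assert (0 < PI * b) by (apply Rmult_lt_0_compat; [apply PI_RGT_0 | exact Hmu]). lra.
  - replace (Cmult (Cmult (RtoC (2 * PI)) Ci) (Cdiv (Cplus (Cmult (RtoC 2) (a, b)) 1) (RtoC 2)))
      with (Cplus (Cplus w w) (0, PI))
      by (unfold w, Cdiv, Cinv, Cplus, Cmult, RtoC, Ci; simpl; f_equal; field).
    rewrite !Cexp_add, Cexp_i_PI. fold z. ring.
  - replace (Cmult (Cmult (RtoC (2 * PI)) Ci) (Cmult (RtoC 2) (a, b)))
      with (Cplus w (Cplus w (Cplus w w)))
      by (unfold w, Cplus, Cmult, RtoC, Ci; simpl; f_equal; ring).
    rewrite !Cexp_add. fold z. cbn [Cpow]. ring.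
Qed.
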